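(* Let $V^{(1)},\dots,V^{(6)}$ be the six partitions of the set $W_2^8$ of weight-2 words of length 8 into parallel classes listed below. Then $$|\mathcal{X}(V^{(1)})|=6,\ |\mathcal{X}(V^{(2)})|=2,\ |\mathcal{X}(V^{(3)})|=2,\ |\mathcal{X}(V^{(4)})|=14,\ |\mathcal{X}(V^{(5)})|=0,\ |\mathcal{X}(V^{(6)})|=0.$$
   Context: Coordinates of $\mathbb{F}_2^8$ are indexed $0,\dots,7$; a weight-2 word is identified with its support, a pair $\{a,b\}$. $W_2^8$ is the set of all 28 words of length 8 and weight 2. A parallel class is a set of 4 weight-2 words with pairwise disjoint supports; a partition $V=\{P_1,\dots,P_7\}$ of $W_2^8$ into 7 parallel classes is considered. For $x\in\mathbb{F}_2^8$ of weight 4, a parallel class $P$ is $x$-even if every word of $P$ is orthogonal to $x$ over $\mathbb{F}_2$, and $x$-odd if no word of $P$ is orthogonal to $x$. $\mathcal{X}(V)$ is the set of all $x\in\mathbb{F}_2^8$ of weight 4 such that among $P_1,\dots,P_7$ exactly four are $x$-odd and three are $x$-even. The partitions (each class written as its four pairs): $V^{(1)}$: $\{07,16,25,34\}$, $\{17,06,35,24\}$, $\{27,36,15,04\}$, $\{37,26,05,14\}$, $\{47,56,13,02\}$, $\{57,46,03,12\}$, $\{67,45,23,01\}$. $V^{(2)}$: $\{07,26,15,34\}$, $\{17,36,05,24\}$, $\{27,06,35,14\}$, $\{37,16,25,04\}$, $\{47,56,13,02\}$, $\{57,46,03,12\}$, $\{67,45,23,01\}$. $V^{(3)}$: $\{07,26,35,14\}$,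 $\{17,36,05,24\}$, $\{27,06,15,34\}$, $\{37,16,25,04\}$, $\{47,56,03,12\}$, $\{57,46,13,02\}$, $\{67,45,23,01\}$. $V^{(4)}$: $\{07,16,35,24\}$, $\{17,06,25,34\}$, $\{27,36,15,04\}$, $\{37,26,05,14\}$, $\{47,56,13,02\}$, $\{57,46,03,12\}$, $\{67,45,23,01\}$. $V^{(5)}$: $\{07,26,15,34\}$, $\{17,56,24,03\}$, $\{27,46,05,13\}$, $\{37,16,25,04\}$, $\{47,06,35,12\}$, $\{57,36,14,02\}$, $\{67,45,23,01\}$. $V^{(6)}$: $\{07,56,34,12\}$, $\{17,26,45,03\}$, $\{27,06,35,14\}$, $\{37,46,15,02\}$, $\{47,16,05,23\}$, $\{57,36,24,01\}$, $\{67,25,04,13\}$. Here e.g. $07$ denotes the pair $\{0,7\}$. *)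

From mathcomp Require Import all_boot all_order all_algebra.
Set Implicit Arguments. Unset Strict Implicit. Unset Printing Implicit Defensive.
Import GRing.Theory.
Local Open Scope ring_scope.

Definition word := 'rV['F_2]_8.

Definition wt (x : word) : nat := #|[set i | x 0 i != 0]|.

Definition orth (x y : word) : bool := (\sum_(i < 8) x 0 i * y 0 i) == 0.

Definition pw (a b : nat) : word :=
  \row_(i < 8) (((i == a :> nat) || (i == b :> nat))%:R : 'F_2).

(* A parallel class is given as a list of words; a partition as a list of classes. *)
Definition x_even (x : word) (P : seq word) : bool := all (fun w => orth w x) P.
Definition x_odd (x : word) (P : seq word) : bool := all (fun w => ~~ orth w x) P.

Definition Xset (V : seq (seq word)) : {set word} :=
  [set x : word | [&& wt x == 4%N, count (x_odd x) V == 4%N & count (x_even x) V == 3%N]].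

Definition V1 : seq (seq word) :=
  [:: [:: pw 0 7; pw 1 6; pw 2 5; pw 3 4]; [:: pw 1 7; pw 0 6; pw 3 5; pw 2 4];
      [:: pw 2 7; pw 3 6; pw 1 5; pw 0 4]; [:: pw 3 7; pw 2 6; pw 0 5; pw 1 4];
      [:: pw 4 7; pw 5 6; pw 1 3; pw 0 2]; [:: pw 5 7; pw 4 6; pw 0 3; pw 1 2];
      [:: pw 6 7; pw 4 5; pw 2 3; pw 0 1]].
Definition V2 : seq (seq word) :=
  [:: [:: pw 0 7; pw 2 6; pw 1 5; pw 3 4]; [:: pw 1 7; pw 3 6; pw 0 5; pw 2 4];
      [:: pw 2 7; pw 0 6; pw 3 5; pw 1 4]; [:: pw 3 7; pw 1 6; pw 2 5; pw 0 4];
      [:: pw 4 7; pw 5 6; pw 1 3; pw 0 2]; [:: pw 5 7; pw 4 6; pw 0 3; pw 1 2];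
      [:: pw 6 7; pw 4 5; pw 2 3; pw 0 1]].
Definition V3 : seq (seq word) :=
  [:: [:: pw 0 7; pw 2 6; pw 3 5; pw 1 4]; [:: pw 1 7; pw 3 6; pw 0 5; pw 2 4];
      [:: pw 2 7; pw 0 6; pw 1 5; pw 3 4]; [:: pw 3 7; pw 1 6; pw 2 5; pw 0 4];
      [:: pw 4 7; pw 5 6; pw 0 3; pw 1 2]; [:: pw 5 7; pw 4 6; pw 1 3; pw 0 2];
      [:: pw 6 7; pw 4 5; pw 2 3; pw 0 1]].
Definition V4 : seq (seq word) :=
  [:: [:: pw 0 7; pw 1 6; pw 3 5; pw 2 4]; [:: pw 1 7; pw 0 6; pw 2 5; pw 3 4];
      [:: pw 2 7; pw 3 6; pw 1 5; pw 0 4]; [:: pw 3 7; pw 2 6; pw 0 5; pw 1 4];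
      [:: pw 4 7; pw 5 6; pw 1 3; pw 0 2]; [:: pw 5 7; pw 4 6; pw 0 3; pw 1 2];
      [:: pw 6 7; pw 4 5; pw 2 3; pw 0 1]].
Definition V5 : seq (seq word) :=
  [:: [:: pw 0 7; pw 2 6; pw 1 5; pw 3 4]; [:: pw 1 7; pw 5 6; pw 2 4; pw 0 3];
      [:: pw 2 7; pw 4 6; pw 0 5; pw 1 3]; [:: pw 3 7; pw 1 6; pw 2 5; pw 0 4];
      [:: pw 4 7; pw 0 6; pw 3 5; pw 1 2]; [:: pw 5 7; pw 3 6; pw 1 4; pw 0 2];
      [:: pw 6 7; pw 4 5; pw 2 3; pw 0 1]].
Definition V6 : seq (seq word) :=
  [:: [:: pw 0 7; pw 5 6; pw 3 4; pw 1 2]; [:: pw 1 7; pw 2 6; pw 4 5; pw 0 3];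
      [:: pw 2 7; pw 0 6; pw 3 5; pw 1 4]; [:: pw 3 7; pw 4 6; pw 1 5; pw 0 2];
      [:: pw 4 7; pw 1 6; pw 0 5; pw 2 3]; [:: pw 5 7; pw 3 6; pw 2 4; pw 0 1];
      [:: pw 6 7; pw 2 5; pw 0 4; pw 1 3]].

From mathcomp Require Import all_boot all_order all_algebra.
Import GRing.Theory.
Local Open Scope ring_scope.

(* Identify F_2^8 with the 8-bit binary numbers below 256.  Since 1 + 1 = 0
   in F_2, the weight-2 word with support {a, b} is orthogonal to x exactly
   when x_a = x_b, so whether a number encodes a word of X(V) only depends on
   its bits; the six cardinalities are then counts over 0 <= n < 256. *)

Definition bit (n i : nat) : bool := odd (n %/ 2 ^ i).

Lemma bitS n i : bit n i.+1 = bit n./2 i.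
Proof. by rewrite /bit expnS divnMA divn2. Qed.

Lemma eq_bits_lt_pow2 k m n : (m < 2 ^ k)%N -> (n < 2 ^ k)%N ->
  (forall i, (i < k)%N -> bit m i = bit n i) -> m = n.
Proof.
elim: k m n => [|k IHk] m n.
  by rewrite expn0 !ltnS !leqn0 => /eqP-> /eqP->.
move=> ltm ltn eq_bit.
have eq_odd : odd m = odd n by have := eq_bit 0%N isT; rewrite /bit !divn1.
have eq_half : m./2 = n./2.
  apply: IHk => [||i lt_ik]; [| | by rewrite -!bitS eq_bit];
    by rewrite -divn2 ltn_divLR // -expnSr.
by rewrite -[m]odd_double_half -[n]odd_double_half eq_odd eq_half.
Qed.

Definition word_of_nat (n : nat) : word := \row_(i < 8) (bit n i)%:R.

Lemma word_of_nat_neq0 n (i : 'I_8) : (word_of_nat n 0 i != 0) = bit n i.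
Proof. by rewrite mxE; case: bit. Qed.

Lemma bijective_word_of_ord : bijective (fun n : 'I_256 => word_of_nat n).
Proof.
apply: inj_card_bij; last by rewrite card_ord card_mx card_Fp.
move=> m n eq_mn; apply: val_inj.
apply: (@eq_bits_lt_pow2 8) => [||i lt_i8]; [exact: ltn_ord..|].
have := congr1 (fun x : word => x 0 (inord i) != 0) eq_mn.
by rewrite /= !word_of_nat_neq0 inordK.
Qed.

Lemma wt_word_of_nat n : wt (word_of_nat n) = count (bit n) (iota 0 8).
Proof.
rewrite /wt -sum1dep_card (eq_bigl (fun i : 'I_8 => bit n i)) => [|i].
  by rewrite -(big_mkord (bit n) (fun=> 1%N)) sum1_count.
by rewrite word_of_nat_neq0.
Qed.

Lemma orth_pw (x : word) (a b : 'I_8) : a != b ->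
  orth (pw a b) x = (x 0 a == x 0 b).
Proof.
move=> neq_ab; rewrite /orth (bigD1 a) // (bigD1 b) /=; last by rewrite eq_sym.
rewrite big1 => [|i]; last first.
  by rewrite -!(inj_eq val_inj) !mxE => /andP[/negbTE-> /negbTE->]; rewrite mul0r.
rewrite !mxE !eqxx orbT !mul1r addr0.
by rewrite -(GRing.subr_pchar2 (pchar_Fp (isT : prime 2))) subr_eq0.
Qed.

Definition pwp (p : nat * nat) : word := pw p.1 p.2.

Definition is_pair_support (p : nat * nat) : bool :=
  [&& (p.1 < 8)%N, (p.2 < 8)%N & p.1 != p.2].

Lemma orth_pwp_word_of_nat n p : is_pair_support p ->
  orth (pwp p) (word_of_nat n) = (bit n p.1 == bit n p.2).
Proof.
case/and3P=> lt_a8 lt_b8 neq_ab.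
have neq_ord : inord p.1 != inord p.2 :> 'I_8 by rewrite -(inj_eq val_inj) /= !inordK.
have := orth_pw (word_of_nat n) _ _ neq_ord; rewrite /pwp !inordK // => ->.
by rewrite !mxE !inordK //; do 2!case: bit.
Qed.

Definition bits_in_X (Vp : seq (seq (nat * nat))) (n : nat) : bool :=
  [&& count (bit n) (iota 0 8) == 4%N,
      count (all (fun p => bit n p.1 != bit n p.2)) Vp == 4%N &
      count (all (fun p => bit n p.1 == bit n p.2)) Vp == 3%N].

Lemma mem_Xset_word_of_nat Vp n : all (all is_pair_support) Vp ->
  (word_of_nat n \in Xset (map (map pwp) Vp)) = bits_in_X Vp n.
Proof.
move=> /allP Vp_ok; rewrite inE wt_word_of_nat !count_map.
have eq_odd : count (preim (map pwp) (x_odd (word_of_nat n))) Vp =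
              count (all (fun p => bit n p.1 != bit n p.2)) Vp.
  apply: eq_in_count => c /Vp_ok /allP c_ok; rewrite /= /x_odd all_map.
  by apply: eq_in_all => p /c_ok p_ok; rewrite /= orth_pwp_word_of_nat.
have eq_even : count (preim (map pwp) (x_even (word_of_nat n))) Vp =
               count (all (fun p => bit n p.1 == bit n p.2)) Vp.
  apply: eq_in_count => c /Vp_ok /allP c_ok; rewrite /= /x_even all_map.
  by apply: eq_in_all => p /c_ok p_ok; rewrite /= orth_pwp_word_of_nat.
by rewrite eq_odd eq_even.
Qed.

Lemma card_Xset_pairs Vp : all (all is_pair_support) Vp ->
  #|Xset (map (map pwp) Vp)| = count (bits_in_X Vp) (iota 0 256).
Proof.
move=> Vp_ok; rewrite -sum1_card (reindex _ (onW_bij _ bijective_word_of_ord)).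
rewrite (eq_bigl (fun n : 'I_256 => bits_in_X Vp n)) => [|n]; last first.
  by rewrite mem_Xset_word_of_nat.
by rewrite -(big_mkord (bits_in_X Vp) (fun=> 1%N)) sum1_count.
Qed.

(* [Vk] is convertible to [map (map pwp) Vkp]. *)
Definition V1p : seq (seq (nat * nat)) :=
  [:: [:: (0,7); (1,6); (2,5); (3,4)]; [:: (1,7); (0,6); (3,5); (2,4)];
      [:: (2,7); (3,6); (1,5); (0,4)]; [:: (3,7); (2,6); (0,5); (1,4)];
      [:: (4,7); (5,6); (1,3); (0,2)]; [:: (5,7); (4,6); (0,3); (1,2)];
      [:: (6,7); (4,5); (2,3); (0,1)]].
Definition V2p : seq (seq (nat * nat)) :=
  [:: [:: (0,7); (2,6); (1,5); (3,4)]; [:: (1,7); (3,6); (0,5); (2,4)];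
      [:: (2,7); (0,6); (3,5); (1,4)]; [:: (3,7); (1,6); (2,5); (0,4)];
      [:: (4,7); (5,6); (1,3); (0,2)]; [:: (5,7); (4,6); (0,3); (1,2)];
      [:: (6,7); (4,5); (2,3); (0,1)]].
Definition V3p : seq (seq (nat * nat)) :=
  [:: [:: (0,7); (2,6); (3,5); (1,4)]; [:: (1,7); (3,6); (0,5); (2,4)];
      [:: (2,7); (0,6); (1,5); (3,4)]; [:: (3,7); (1,6); (2,5); (0,4)];
      [:: (4,7); (5,6); (0,3); (1,2)]; [:: (5,7); (4,6); (1,3); (0,2)];
      [:: (6,7); (4,5); (2,3); (0,1)]].
Definition V4p : seq (seq (nat * nat)) :=
  [:: [:: (0,7); (1,6); (3,5); (2,4)]; [:: (1,7); (0,6); (2,5); (3,4)];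
      [:: (2,7); (3,6); (1,5); (0,4)]; [:: (3,7); (2,6); (0,5); (1,4)];
      [:: (4,7); (5,6); (1,3); (0,2)]; [:: (5,7); (4,6); (0,3); (1,2)];
      [:: (6,7); (4,5); (2,3); (0,1)]].
Definition V5p : seq (seq (nat * nat)) :=
  [:: [:: (0,7); (2,6); (1,5); (3,4)]; [:: (1,7); (5,6); (2,4); (0,3)];
      [:: (2,7); (4,6); (0,5); (1,3)]; [:: (3,7); (1,6); (2,5); (0,4)];
      [:: (4,7); (0,6); (3,5); (1,2)]; [:: (5,7); (3,6); (1,4); (0,2)];
      [:: (6,7); (4,5); (2,3); (0,1)]].
Definition V6p : seq (seq (nat * nat)) :=
  [:: [:: (0,7); (5,6); (3,4); (1,2)]; [:: (1,7); (2,6); (4,5); (0,3)];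
      [:: (2,7); (0,6); (3,5); (1,4)]; [:: (3,7); (4,6); (1,5); (0,2)];
      [:: (4,7); (1,6); (0,5); (2,3)]; [:: (5,7); (3,6); (2,4); (0,1)];
      [:: (6,7); (2,5); (0,4); (1,3)]].

Theorem lemma3 :
  #|Xset V1| = 6%N /\ #|Xset V2| = 2%N /\ #|Xset V3| = 2%N /\
  #|Xset V4| = 14%N /\ #|Xset V5| = 0%N /\ #|Xset V6| = 0%N.
Proof.
rewrite (card_Xset_pairs V1p) // (card_Xset_pairs V2p) // (card_Xset_pairs V3p) //
  (card_Xset_pairs V4p) // (card_Xset_pairs V5p) // (card_Xset_pairs V6p);
  by vm_compute.
Qed.
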